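(* Let $n_1,n_2$ be positive integers. Fix $L\in\mathbb{R}^{n_1\times n_2}$ of rank $r$, a basis matrix $G\in\mathbb{R}^{n_1\times r_G}$ with $L_{\mathrm{new}}:=(I-GG^\top)L$ of rank less than $r$, and a matrix $S_0\in\mathbb{R}^{n_1\times n_2}$ with all entries nonzero. For a random subset $\Omega$ of $\{1,\dots,n_1\}\times\{1,\dots,n_2\}$, let $S=\mathcal P_\Omega S_0$ and $M=L+S$, and let ''Success'' be the event that $(L_{\mathrm{new}},S,L^\top G)$ is the unique solution of $$\min_{\tilde L_{\mathrm{new}},\tilde S,\tilde X}\|\tilde L_{\mathrm{new}}\|_*+\lambda\|\tilde S\|_1\ \text{ s.t. }\ \tilde L_{\mathrm{new}}+G\tilde X^\top+\tilde S=M.$$ Let $m_0$ be an integer and $\epsilon_0>0$, and set $\rho_0=\frac{m_0}{n_1n_2}+\epsilon_0\in[0,1]$. Then $$\mathbb{P}_{\mathrm{Unif}(m_0)}(\mathrm{Success})\ge\mathbb{P}_{\mathrm{Ber}(\rho_0)}(\mathrm{Success})-e^{-2n_1n_2\epsilon_0^2}.$$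
   Context: $\mathcal P_\Omega S_0$ keeps the entries of $S_0$ with index in $\Omega$ and sets the others to zero. $\mathbb{P}_{\mathrm{Unif}(m)}$ is probability when $\Omega$ is uniformly distributed among all index subsets of size $m$; $\mathbb{P}_{\mathrm{Ber}(\rho)}$ is probability when each index $(i,j)$ belongs to $\Omega$ independently with probability $\rho$. A basis matrix satisfies $G^\top G=I$. $\lambda>0$ is a fixed parameter; the variables range over $\tilde L_{\mathrm{new}},\tilde S\in\mathbb{R}^{n_1\times n_2}$, $\tilde X\in\mathbb{R}^{n_2\times r_G}$. *)

From HB Require Import structures.
From mathcomp Require Import all_boot all_order all_algebra.
From mathcomp Require Import all_classical all_reals.
From mathcomp.analysis Require Import sequences exp.
Set Implicit Arguments. Unset Strict Implicit. Unset Printing Implicit Defensive.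
Import Order.TTheory GRing.Theory Num.Theory.
Local Open Scope ring_scope.

Section Defs.
Context {R : realType}.

Definition psd n (P : 'M[R]_n) : Prop :=
  P^T = P /\ forall x : 'cV[R]_n, 0 <= (x^T *m P *m x) 0 0.

Definition psd_sqrt n (B : 'M[R]_n) : 'M[R]_n :=
  xget 0 [set P : 'M[R]_n | psd P /\ P *m P = B].

Definition nuclear_norm m n (A : 'M[R]_(m, n)) : R := \tr (psd_sqrt (A^T *m A)).

Definition l1_norm m n (A : 'M[R]_(m, n)) : R := \sum_i \sum_j `|A i j|.

Definition proj_Omega m n (Omega : {set 'I_m * 'I_n}) (A : 'M[R]_(m, n)) :
  'M[R]_(m, n) := \matrix_(i, j) (if (i, j) \in Omega then A i j else 0).

Definition objective (lam : R) n1 n2 rG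
  (Ln : 'M[R]_(n1, n2)) (S : 'M[R]_(n1, n2)) (X : 'M[R]_(n2, rG)) : R :=
  nuclear_norm Ln + lam * l1_norm S.

Definition feasible n1 n2 rG (G : 'M[R]_(n1, rG)) (M : 'M[R]_(n1, n2))
  (Ln : 'M[R]_(n1, n2)) (S : 'M[R]_(n1, n2)) (X : 'M[R]_(n2, rG)) : Prop :=
  Ln + G *m X^T + S = M.

Definition is_minimizer (lam : R) n1 n2 rG (G : 'M[R]_(n1, rG)) (M : 'M[R]_(n1, n2))
  Ln S X : Prop :=
  feasible G M Ln S X /\
  forall Ln' S' X', feasible G M Ln' S' X' ->
    objective lam Ln S X <= objective lam Ln' S' X'.

Definition unique_solution (lam : R) n1 n2 rG (G : 'M[R]_(n1, rG))
  (M : 'M[R]_(n1, n2)) Ln S X : Prop :=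
  is_minimizer lam G M Ln S X /\
  forall Ln' S' X', is_minimizer lam G M Ln' S' X' ->
    (Ln', S', X') = (Ln, S, X).

Definition Success (lam : R) n1 n2 rG (L : 'M[R]_(n1, n2)) (G : 'M[R]_(n1, rG))
  (S0 : 'M[R]_(n1, n2)) (Omega : {set 'I_n1 * 'I_n2}) : Prop :=
  let Lnew := (1%:M - G *m G^T) *m L in
  let S := proj_Omega Omega S0 in
  let M := L + S in
  unique_solution lam G M Lnew S (L^T *m G).

Definition prob_unif n1 n2 (m : nat) (E : {set 'I_n1 * 'I_n2} -> Prop) : R :=
  (#|[set Om : {set 'I_n1 * 'I_n2} | (#|Om| == m) && `[< E Om >]]|%:R)
  / ('C(n1 * n2, m))%:R.

Definition prob_ber n1 n2 (rho : R) (E : {set 'I_n1 * 'I_n2} -> Prop) : R :=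
  \sum_(Om : {set 'I_n1 * 'I_n2} | `[< E Om >])
     rho ^+ #|Om| * (1 - rho) ^+ (n1 * n2 - #|Om|).

End Defs.

(** For a fixed support size the Bernoulli model is uniform, so
    P_Ber(Success) = sum_k P(Bin(N, rho) = k) P_Unif(k)(Success), N = n1 n2.
    Success is monotone decreasing in Omega: deleting entries of Omega deletes
    a piece of S with support disjoint from the rest, the l1 norm splits, and
    unique recovery survives.  For a decreasing family of sets the fraction of
    k-sets in it is nonincreasing in k (double count the pairs B, x with
    x \notin B), hence P_Unif(k) <= P_Unif(m0) for k >= m0 and
    P_Ber(Success) <= P_Unif(m0)(Success) + P(Bin(N, rho) < m0).  Since
    rho = m0/N + eps0, Chernoff's bound together with Hoeffding's lemma for a
    Bernoulli variable bounds the tail by exp(-2 N eps0^2). *)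

From HB Require Import structures.
From mathcomp Require Import all_boot all_order all_algebra.
From mathcomp Require Import all_classical all_reals.
From mathcomp.analysis Require Import sequences exp.
From mathcomp.analysis Require Import topology normedtype derive realfun.
From mathcomp Require Import ring lra.
Set Implicit Arguments. Unset Strict Implicit. Unset Printing Implicit Defensive.
Import Order.TTheory GRing.Theory Num.Theory.
Import numFieldNormedType.Exports.
Local Open Scope ring_scope.

Lemma is_derive_expRN {R : realType} (t : R) :
  is_derive t (1 : R) (fun x : R => expR (- x)) (- expR (- t)).
Proof.
rewrite -mulrN1.
exact: is_derive1_comp (is_derive_expR (- t)) (is_deriveNid t 1).
Qed.

Lemma is_derive_ge0_le {R : realType} (f df : R -> R) (a b : R) :
  (forall x, is_derive x (1 : R) f (df x)) -> (forall x, a <= x -> 0 <= df x) ->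
  a <= b -> f a <= f b.
Proof.
move=> f_df df_ge0 ab.
have [|c] := @MVT_segment R f df a b ab (fun x _ => f_df x).
  apply/continuous_subspaceT => x.
  have [f_derivable _] := f_df x.
  exact/differentiable_continuous/derivable1_diffP.
rewrite in_itv /= => /andP[ac _] E.
by rewrite -subr_ge0 E mulr_ge0 ?subr_ge0 ?df_ge0.
Qed.

Section HoeffdingBernoulli.
Variables (R : realType) (p : R).
Hypotheses (p_ge0 : 0 <= p) (p_le1 : p <= 1).

Let mgf (t : R) : R := 1 - p + p * expR (- t).
Let tilt (t : R) : R := p * expR (- t).

Let mgf_gt0 t : 0 < mgf t.
Proof.
have e_gt0 := expR_gt0 (- t); rewrite /mgf.
have [->|p_neq1] := eqVneq p 1; first by rewrite subrr add0r mul1r.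
have p_lt1 : p < 1 by rewrite lt_neqAle p_neq1.
have := mulr_ge0 p_ge0 (ltW e_gt0); lra.
Qed.

Let is_derive_tilt t : is_derive t (1 : R) tilt (- tilt t).
Proof.
by apply: (is_derive_eq (is_deriveZ p (is_derive_expRN t))); rewrite /tilt scalerN.
Qed.

Let is_derive_mgf t : is_derive t (1 : R) mgf (- tilt t).
Proof.
apply: (is_derive_eq (is_deriveD (is_derive_cst (1 - p) t 1) (is_derive_tilt t))).
by rewrite add0r.
Qed.

(* [gap t = t^2/8 - t p - ln (mgf t)] vanishes at 0 together with its derivative
   [gap' t = t/4 - p + q t], where [q = tilt / mgf] is a probability, and
   [gap'' t = 1/4 - q t (1 - q t) >= 0]. *)
Let gap' (t : R) : R := - p + 4^-1 * t + tilt t / mgf t.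
Let gap'' (t : R) : R := 4^-1 - tilt t * (1 - p) / mgf t ^+ 2.
Let gap (t : R) : R := - (t * p) + 8^-1 * t ^+ 2 - ln (mgf t).

Let is_derive_gap' t : is_derive t (1 : R) gap' (gap'' t).
Proof.
have mgf_neq0 : mgf t != 0 by rewrite gt_eqF.
have d_id := is_deriveZ (4^-1 : R) (is_derive_id t (1 : R)).
have d_ratio := is_deriveM (is_derive_tilt t) (is_deriveV mgf_neq0 (is_derive_mgf t)).
apply: (is_derive_eq (is_deriveD (is_deriveD (is_derive_cst (- p) t 1) d_id) d_ratio)).
move: mgf_neq0; rewrite /gap'' /tilt /mgf /GRing.scale /=.
by set e := expR (- t) => mgf_neq0; field.
Qed.

Let is_derive_gap t : is_derive t (1 : R) gap (gap' t).
Proof.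
have mgf_neq0 : mgf t != 0 by rewrite gt_eqF.
have d1 := is_deriveN (is_deriveM (is_derive_id t (1 : R)) (is_derive_cst p t 1)).
have d2 := is_deriveZ (8^-1 : R) (is_deriveX 2 (is_derive_id t (1 : R))).
have d3 := is_derive1_comp (is_derive1_ln (mgf_gt0 t)) (is_derive_mgf t).
apply: (is_derive_eq (is_deriveB (is_deriveD d1 d2) d3)).
move: mgf_neq0; rewrite /gap' /tilt /mgf /GRing.scale /cst /= expr1.
by set e := expR (- t) => mgf_neq0; field.
Qed.

Let gap''_ge0 t : 0 <= gap'' t.
Proof.
rewrite /gap'' subr_ge0 ler_pdivrMr ?exprn_gt0 //.
have := mgf_gt0 t; rewrite /tilt /mgf; set e := expR (- t) => mgf_pos.
have := sqr_ge0 (p * e - (1 - p)); nra.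
Qed.

Let gap'_ge0 t : 0 <= t -> 0 <= gap' t.
Proof.
move=> t_ge0; have := is_derive_ge0_le is_derive_gap' (fun x _ => gap''_ge0 x) t_ge0.
suff -> : gap' 0 = 0 by [].
by rewrite /gap' /tilt /mgf oppr0 expR0 mulr1 mulr0 addr0 subrK divr1 addNr.
Qed.

Lemma hoeffding_bernoulli t : 0 <= t ->
  1 - p + p * expR (- t) <= expR (- (t * p) + 8^-1 * t ^+ 2).
Proof.
move=> t_ge0; have := is_derive_ge0_le is_derive_gap gap'_ge0 t_ge0.
have -> : gap 0 = 0.
  by rewrite /gap /mgf oppr0 expR0 mulr1 subrK ln1 mul0r expr0n /= mulr0; lra.
by rewrite /gap subr_ge0 -ler_expR lnK //; exact: mgf_gt0.
Qed.

End HoeffdingBernoulli.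

(* Chernoff's bound with the tilting parameter [t = 4 eps]. *)
Lemma binomial_lower_tail (R : realType) (N m : nat) (rho eps : R) :
  0 <= rho <= 1 -> 0 <= eps -> m%:R + N%:R * eps <= N%:R * rho ->
  \sum_(k < N.+1 | (k < m)%N) ('C(N, k))%:R * (rho ^+ k * (1 - rho) ^+ (N - k))
  <= expR (- (2 * N%:R * eps ^+ 2)).
Proof.
move=> /andP[rho_ge0 rho_le1] eps_ge0 m_le; set t := 4 * eps.
have t_ge0 : 0 <= t by rewrite /t; lra.
pose tilted k := ('C(N, k))%:R * ((rho * expR (- t)) ^+ k * (1 - rho) ^+ (N - k)).
have tilted_ge0 k : 0 <= tilted k.
  by rewrite mulr_ge0 ?mulr_ge0 ?exprn_ge0 ?subr_ge0 ?mulr_ge0 ?expR_ge0.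
apply: (@le_trans _ _ (\sum_(k < N.+1) tilted k * expR (t * m%:R))).
  rewrite big_mkcond /=; apply: ler_sum => k _; case: ltnP => [k_lt_m|_].
    rewrite /tilted exprMn -expRM_natl.
    rewrite [leRHS](_ : _ = ('C(N, k))%:R * (rho ^+ k * (1 - rho) ^+ (N - k))
                            * expR (k%:R * - t + t * m%:R)); last by rewrite expRD; ring.
    rewrite ler_peMr ?mulr_ge0 ?exprn_ge0 ?subr_ge0 //.
    apply: le_trans (expR_ge1Dx _).
    have : (k%:R : R) <= m%:R by rewrite ler_nat ltnW.
    nra.
  by rewrite mulr_ge0 ?expR_ge0.
have bin_mgf : \sum_(k < N.+1) tilted k = (1 - rho + rho * expR (- t)) ^+ N.
  by rewrite exprDn; apply: eq_bigr => k _; rewrite /tilted mulr_natl mulrC.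
have mgf_ge0 : 0 <= 1 - rho + rho * expR (- t).
  by rewrite addr_ge0 ?subr_ge0 ?mulr_ge0 ?expR_ge0.
rewrite -mulr_suml bin_mgf.
have := lerXn2r N mgf_ge0 (expR_ge0 _) (hoeffding_bernoulli rho_ge0 rho_le1 t_ge0).
rewrite -expRM_natl => mgf_le.
apply: le_trans (ler_wpM2r (expR_ge0 _) mgf_le) _.
rewrite -expRD ler_expR /t; nra.
Qed.

Section DownwardClosedFamily.
Variables (T : finType) (P : pred {set T}).

Definition level k := #|[set A : {set T} | (#|A| == k) && P A]|.

Lemma level_le_bin k : (level k <= 'C(#|T|, k))%N.
Proof.
rewrite -card_draws; apply: subset_leq_card.
by apply/fintype.subsetP => A; rewrite !inE => /andP[].
Qed.

Lemma sum_by_level (R : nmodType) (F : nat -> R) :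
  \sum_(A : {set T} | P A) F #|A| = \sum_(k < #|T|.+1) F k *+ level k.
Proof.
rewrite (partition_big (fun A : {set T} => (inord #|A| : 'I_#|T|.+1)) xpredT) //=.
apply: eq_bigr => k _; rewrite -sumr_const.
apply: eq_big => A.
  rewrite inE andbC; congr (_ && _).
  by rewrite -(inj_eq val_inj) /= inordK // ltnS max_card.
by move=> /andP[_ /eqP <-]; rewrite inordK // ltnS max_card.
Qed.

Hypothesis P_subset : forall A B : {set T}, B \subset A -> P A -> P B.

(* Double counting of the pairs (B, x) with x \notin B, #|B| = k and P (x |: B):
   removing x from a set counted by [level k.+1] gives such a pair. *)
Lemma level_succ_le k : (level k.+1 * k.+1 <= level k * (#|T| - k))%N.
Proof.
have -> : (level k.+1 * k.+1 = \sum_(A : {set T}) \sum_(x : T)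
    [&& #|A| == k.+1, P A & x \in A])%N.
  rewrite /level -sum_nat_const (big_mkcond (fun A => A \in _)) /=.
  apply: eq_bigr => A _; rewrite inE.
  case: (boolP ((#|A| == k.+1) && P A)) => [/andP[/eqP cardA PA]|/negbTE nPA].
    by rewrite cardA eqxx PA -cardA -sum1_card big_mkcond.
  by rewrite big1 // => x _; rewrite andbA nPA.
have -> : (level k * (#|T| - k) = \sum_(B : {set T}) \sum_(x : T)
    [&& #|B| == k, P B & x \notin B])%N.
  rewrite /level -sum_nat_const (big_mkcond (fun A => A \in _)) /=.
  apply: eq_bigr => B _; rewrite inE.
  case: (boolP ((#|B| == k) && P B)) => [/andP[/eqP cardB PB]|/negbTE nPB].
    rewrite cardB eqxx PB -cardB -(cardsC B) addKn -sum1_card big_mkcond.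
    by apply: eq_bigr => x _; rewrite finset.in_setC.
  by rewrite big1 // => x _; rewrite andbA nPB.
rewrite exchange_big [X in (_ <= X)%N]exchange_big /=.
apply: leq_sum => x _.
rewrite -big_mkcond -[X in (_ <= X)%N]big_mkcond /=.
rewrite (reindex_onto (fun B => x |: B) (fun A => A :\ x)) /=; last first.
  by move=> A /and3P[_ _ xA]; rewrite finset.setD1K.
rewrite big_mkcond [X in (_ <= X)%N]big_mkcond /=; apply: leq_sum => B _.
case: (boolP (x \in B)) => xB.
  suff /negbTE -> : (x |: B) :\ x != B by rewrite andbF.
  by apply: contraTneq xB => <-; rewrite !inE eqxx.
rewrite finset.setU1K // eqxx andbT finset.setU11 andbT cardsU1 xB add1n eqSS.
case: eqP => //= _; case: (boolP (P (x |: B))) => //=.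
by move/(P_subset (finset.subsetUr [set x] B)) ->.
Qed.

Lemma level_mono m k : (m <= k)%N ->
  (level k * 'C(#|T|, m) <= level m * 'C(#|T|, k))%N.
Proof.
move=> /subnK <-; elim: (k - m)%N => [|d IH]; first by rewrite add0n.
rewrite addSn -(leq_pmul2r (ltn0Sn (d + m))).
have -> : (level m * 'C(#|T|, (d + m).+1) * (d + m).+1
          = level m * ('C(#|T|, d + m) * (#|T| - (d + m))))%N.
  by rewrite -mulnA [X in _ * X = _]mulnC mul_bin_left [X in _ * X = _]mulnC.
apply: (@leq_trans (level (d + m) * (#|T| - (d + m)) * 'C(#|T|, m))).
  by rewrite mulnAC leq_mul2r level_succ_le orbT.
by rewrite mulnAC mulnA leq_mul2r IH orbT.
Qed.

Lemma binomial_sum_le_level_tail (R : realFieldType) (rho : R) m :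
  0 <= rho <= 1 -> (m <= #|T|)%N ->
  \sum_(A : {set T} | P A) rho ^+ #|A| * (1 - rho) ^+ (#|T| - #|A|) <=
  (level m)%:R / ('C(#|T|, m))%:R +
  \sum_(k < #|T|.+1 | (k < m)%N) ('C(#|T|, k))%:R * (rho ^+ k * (1 - rho) ^+ (#|T| - k)).
Proof.
move=> /andP[rho_ge0 rho_le1] m_le; set n := #|T|.
pose w k := rho ^+ k * (1 - rho) ^+ (n - k).
have w_ge0 k : 0 <= w k by rewrite mulr_ge0 ?exprn_ge0 ?subr_ge0.
have bin_gt0 : 0 < ('C(n, m))%:R :> R by rewrite ltr0n bin_gt0.
have binomial_total : \sum_(k < n.+1) ('C(n, k))%:R * w k = 1.
  transitivity ((1 - rho + rho) ^+ n); last by rewrite subrK expr1n.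
  by rewrite exprDn; apply: eq_bigr => k _; rewrite mulr_natl mulrC.
set u := (level m)%:R / _.
have -> : u = \sum_(k < n.+1) u * (('C(n, k))%:R * w k).
  by rewrite -mulr_sumr binomial_total mulr1.
rewrite (sum_by_level w) [X in _ <= _ + X]big_mkcond -big_split /=.
apply: ler_sum => k _.
have u_ge0 : 0 <= u by rewrite divr_ge0.
rewrite -[w k *+ _]mulr_natl; case: ltnP => [k_lt_m|m_le_k].
  rewrite addrC -[X in X <= _]addr0 lerD ?(mulr_ge0 u_ge0 (mulr_ge0 _ (w_ge0 k))) //.
  by rewrite ler_wpM2r // ler_nat level_le_bin.
rewrite addr0 [leRHS]mulrA ler_wpM2r // /u mulrAC ler_pdivlMr //.
by rewrite -!natrM ler_nat level_mono.
Qed.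

End DownwardClosedFamily.

Section SparsePartRemoval.
Variables (R : realType) (n1 n2 rG : nat) (lam : R) (G : 'M[R]_(n1, rG)).
Hypothesis lam_gt0 : 0 < lam.

Lemma l1_normD (A B : 'M[R]_(n1, n2)) : l1_norm (A + B) <= l1_norm A + l1_norm B.
Proof.
rewrite /l1_norm -big_split /=; apply: ler_sum => i _.
rewrite -big_split /=; apply: ler_sum => j _.
by rewrite mxE ler_normD.
Qed.

Lemma feasible_addr (M Ln S D : 'M[R]_(n1, n2)) (X : 'M[R]_(n2, rG)) :
  feasible G M Ln (S + D) X <-> feasible G (M - D) Ln S X.
Proof.
rewrite /feasible addrA; split => [<-|->]; first by rewrite addrK.
by rewrite subrK.
Qed.

Lemma objective_addr_le (Ln S D : 'M[R]_(n1, n2)) (X : 'M[R]_(n2, rG)) :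
  objective lam Ln (S + D) X <= objective lam Ln S X + lam * l1_norm D.
Proof.
rewrite /objective -addrA lerD2l -mulrDr ler_pM2l //; exact: l1_normD.
Qed.

Lemma unique_solution_subr (M Ln S D : 'M[R]_(n1, n2)) (X : 'M[R]_(n2, rG)) :
  l1_norm (S + D) = l1_norm S + l1_norm D ->
  unique_solution lam G M Ln (S + D) X -> unique_solution lam G (M - D) Ln S X.
Proof.
move=> l1_split [[feas opt] uniq].
have obj_split : objective lam Ln (S + D) X = objective lam Ln S X + lam * l1_norm D.
  by rewrite /objective l1_split mulrDr addrA.
have opt' Ln' S' X' : feasible G (M - D) Ln' S' X' ->
    objective lam Ln S X <= objective lam Ln' S' X'.
  move=> /feasible_addr /opt; have := objective_addr_le Ln' S' D X'.
  rewrite obj_split; lra.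
split; first by split => //; exact/feasible_addr.
move=> Ln' S' X' [feas' opt''].
have opt_shift : is_minimizer lam G M Ln' (S' + D) X'.
  split; first exact/feasible_addr.
  move=> Ln'' S'' X'' /opt; have := opt'' _ _ _ (proj1 (feasible_addr _ _ _ _ _) feas).
  have := objective_addr_le Ln' S' D X'; rewrite obj_split; lra.
by case: (uniq _ _ _ opt_shift) => -> /addIr -> ->.
Qed.

End SparsePartRemoval.

Lemma l1_norm_proj_Omega_subset (R : realType) n1 n2 (A : 'M[R]_(n1, n2))
    (Om Om' : {set 'I_n1 * 'I_n2}) : Om' \subset Om ->
  l1_norm (proj_Omega Om A) =
  l1_norm (proj_Omega Om' A) + l1_norm (proj_Omega Om A - proj_Omega Om' A).
Proof.
move=> /fintype.subsetP sub_Om.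
rewrite /l1_norm -big_split /=; apply: eq_bigr => i _.
rewrite -big_split /=; apply: eq_bigr => j _; rewrite !mxE.
case: ifP => [inOm|/negbT notinOm]; case: ifP => [inOm'|_].
- by rewrite subrr normr0 addr0.
- by rewrite normr0 subr0 add0r.
- by rewrite (negbTE (contra (sub_Om (i, j)) notinOm)) in inOm'.
- by rewrite subrr normr0 addr0.
Qed.

Lemma Success_subset (R : realType) n1 n2 rG (lam : R) (L : 'M[R]_(n1, n2))
    (G : 'M[R]_(n1, rG)) (S0 : 'M[R]_(n1, n2)) (Om Om' : {set 'I_n1 * 'I_n2}) :
  0 < lam -> Om' \subset Om -> Success lam L G S0 Om -> Success lam L G S0 Om'.
Proof.
move=> lam_gt0 sub_Om; rewrite /Success.
set S := proj_Omega Om S0; set S' := proj_Omega Om' S0.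
have S_split : S = S' + (S - S') by rewrite addrC subrK.
have l1_split := l1_norm_proj_Omega_subset S0 sub_Om; rewrite -/S -/S' in l1_split.
have -> : L + S' = L + S - (S - S') by rewrite opprB addrCA addrK addrC.
by move=> success; apply: (unique_solution_subr lam_gt0); rewrite -S_split.
Qed.

Theorem lemma1 (R : realType) (n1 n2 r rG : nat) (lam : R)
  (L : 'M[R]_(n1, n2)) (G : 'M[R]_(n1, rG)) (S0 : 'M[R]_(n1, n2))
  (m0 : nat) (eps0 : R) :
  (0 < n1)%N -> (0 < n2)%N ->
  0 < lam ->
  \rank L = r ->
  G^T *m G = 1%:M ->
  (\rank ((1%:M - G *m G^T) *m L) < r)%N ->
  (forall i j, S0 i j != 0) ->
  0 < eps0 ->
  0 <= m0%:R / (n1 * n2)%:R + eps0 <= 1 ->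
  prob_unif m0 (Success lam L G S0) >=
  prob_ber (m0%:R / (n1 * n2)%:R + eps0) (Success lam L G S0)
  - expR (- (2 * (n1 * n2)%:R * eps0 ^+ 2)).
Proof.
move=> n1_gt0 n2_gt0 lam_gt0 _ _ _ _ eps0_gt0.
set N := (n1 * n2)%N; set rho := _ + eps0 => rho_01.
have N_gt0 : 0 < N%:R :> R by rewrite ltr0n muln_gt0 n1_gt0.
have card_idx : #|{: 'I_n1 * 'I_n2}| = N by rewrite card_prod !card_ord.
have m0_le_N : (m0 <= N)%N.
  have : m0%:R / N%:R < 1 :> R by case/andP: rho_01; rewrite /rho; lra.
  by rewrite ltr_pdivrMr // mul1r ltr_nat => /ltnW.
have rho_N : m0%:R + N%:R * eps0 <= N%:R * rho.
  by rewrite /rho mulrDr mulrCA divff ?mulr1 ?gt_eqF.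
pose succ Om := `[< Success lam L G S0 Om >].
have succ_subset (A B : {set 'I_n1 * 'I_n2}) : B \subset A -> succ A -> succ B.
  by move=> sub_BA /asboolP succ_A; apply/asboolP; exact: Success_subset succ_A.
rewrite -card_idx in m0_le_N.
have := binomial_sum_le_level_tail succ_subset rho_01 m0_le_N.
have := binomial_lower_tail rho_01 (ltW eps0_gt0) rho_N.
rewrite card_idx /prob_unif /prob_ber -/N => tail_le ber_le.
by rewrite lerBlDr (le_trans ber_le) // lerD2l.
Qed.
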